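(* Under Plurality, $2$-by-$2$ GS-games of types (ii), (iii), (iv) and (v) are realizable, while $2$-by-$2$ GS-games of types (i) and (vi) are not realizable. That is, for each of the types (ii)–(v) there exist a finite candidate set, a tie-breaking order, a profile $V$ and a $2$-by-$2$ GS-game for $V$ under Plurality of that type, and no $2$-by-$2$ GS-game under Plurality (for any candidate set, tie-breaking order and profile) is of type (i) or (vi).
   Context: Each voter $i$ has a strict linear order $v_i$ over the candidate set $C$. Plurality: each candidate gets one point from each voter ranking her first; the highest score wins, ties broken in favour of the candidate highest in a fixed strict linear order $>$ on $C$. Write $\mathcal{R}$ for the rule and $(V_{-i},v_i')$ for $V$ with $v_i$ replaced by $v_i'$. A GS-manipulation of voter $i$ at $V$ is a vote $v_i'$ such that $i$ strictly prefers $\mathcal{R}(V_{-i},v_i')$ to $\mathcal{R}(V)$ and for every vote $v_i''$ either $\mathcal{R}(V_{-i},v_i'')=\mathcal{R}(V_{-i},v_i')$ or $i$ strictly prefers $\mathcal{R}(V_{-i},v_i')$ to $\mathcal{R}(V_{-i},v_i'')$; $i$ is a GS-manipulator if he has one. A GS-game for $V$ has as players all GS-manipulators at $V$, each player $i$ having action set consisting of $v_i$ and a subset of his GS-manipulations; other voters vote sincerely; players compare action profiles by their preferences over the resulting winners. A $2$-by-$2$ GS-game is one with exactly two players $1,2$ (i.e. exactly two GS-manipulators at $V$), with action sets $\{s_1,i_1\}$ and $\{s_2,i_2\}$ where $s_p=v_p$ is the sincere vote and $i_p$ a GS-manipulation. Let $W(a,b)$ be the winner when player 1 plays $a$ and player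 2 plays $b$. Define $\rho_1=+$ if player 1 strictly prefers $W(i_1,i_2)$ to $W(s_1,i_2)$, $\rho_1=0$ if $W(i_1,i_2)=W(s_1,i_2)$, $\rho_1=-$ if player 1 strictly prefers $W(s_1,i_2)$ to $W(i_1,i_2)$; define $\rho_2$ analogously for player 2 comparing $W(i_1,i_2)$ with $W(i_1,s_2)$. The type of the game is determined by the unordered pair $\{\rho_1,\rho_2\}$: type (i) $\{+,+\}$, (ii) $\{-,-\}$, (iii) $\{0,0\}$, (iv) $\{+,0\}$, (v) $\{-,0\}$, (vi) $\{+,-\}$. *)

From mathcomp Require Import all_boot fingroup perm.

Set Implicit Arguments.
Unset Strict Implicit.
Unset Printing Implicit Defensive.

(* A vote (strict linear order on candidates) is a permutation
   v : 'S_m.+1 mapping each candidate to its POSITION in the ranking,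
   position 0 being the top.  The tie-breaking order > is encoded the same way. *)
Definition vote (m : nat) := 'S_m.+1.

Definition prefers (m : nat) (v : vote m) (a b : 'I_m.+1) : bool := v a < v b.

Definition profile (m n : nat) := {ffun 'I_n -> vote m}.

Definition upd (m n : nat) (V : profile m n) (i : 'I_n) (v : vote m) : profile m n :=
  [ffun j => if j == i then v else V j].

Definition score (m n : nat) (V : profile m n) (c : 'I_m.+1) : nat :=
  #|[pred i : 'I_n | V i c == ord0]|.

Definition plurality (m n : nat) (tau : vote m) (V : profile m n) : 'I_m.+1 :=
  let c0 := [arg max_(c > ord0) score V c] in
  [arg min_(c < c0 | [forall d, score V d <= score V c]) tau c].

Definition GS_manipulation (m n : nat) (tau : vote m) (V : profile m n)
    (i : 'I_n) (v' : vote m) : Prop :=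
  prefers (V i) (plurality tau (upd V i v')) (plurality tau V) /\
  forall v'' : vote m,
    plurality tau (upd V i v'') = plurality tau (upd V i v') \/
    prefers (V i) (plurality tau (upd V i v')) (plurality tau (upd V i v'')).

Definition GS_manipulator (m n : nat) (tau : vote m) (V : profile m n) (i : 'I_n) : Prop :=
  exists v', GS_manipulation tau V i v'.

(* A 2-by-2 GS-game for V: players p1 <> p2 are exactly the GS-manipulators
   at V; player p's actions are {V p, i_p} with i_p a GS-manipulation of p. *)
Definition is_2by2_GS_game (m n : nat) (tau : vote m) (V : profile m n)
    (p1 p2 : 'I_n) (i1 i2 : vote m) : Prop :=
  [/\ p1 <> p2,
      (forall i, GS_manipulator tau V i <-> (i = p1 \/ i = p2)),
      GS_manipulation tau V p1 i1 &
      GS_manipulation tau V p2 i2].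

Definition W (m n : nat) (tau : vote m) (V : profile m n)
    (p1 p2 : 'I_n) (a b : vote m) : 'I_m.+1 :=
  plurality tau (upd (upd V p1 a) p2 b).

Inductive sign := Plus | Zero | Minus.

Definition cmp (m : nat) (v : vote m) (x y : 'I_m.+1) : sign :=
  if x == y then Zero else if prefers v x y then Plus else Minus.

Definition rho1 (m n : nat) (tau : vote m) (V : profile m n)
    (p1 p2 : 'I_n) (i1 i2 : vote m) : sign :=
  cmp (V p1) (W tau V p1 p2 i1 i2) (W tau V p1 p2 (V p1) i2).

Definition rho2 (m n : nat) (tau : vote m) (V : profile m n)
    (p1 p2 : 'I_n) (i1 i2 : vote m) : sign :=
  cmp (V p2) (W tau V p1 p2 i1 i2) (W tau V p1 p2 i1 (V p2)).

Inductive game_type := T_i | T_ii | T_iii | T_iv | T_v | T_vi.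

Definition type_of (r1 r2 : sign) : game_type :=
  match r1, r2 with
  | Plus, Plus => T_i
  | Minus, Minus => T_ii
  | Zero, Zero => T_iii
  | Plus, Zero | Zero, Plus => T_iv
  | Minus, Zero | Zero, Minus => T_v
  | Plus, Minus | Minus, Plus => T_vi
  end.

Definition game_type_of (m n : nat) (tau : vote m) (V : profile m n)
    (p1 p2 : 'I_n) (i1 i2 : vote m) : game_type :=
  type_of (rho1 tau V p1 p2 i1 i2) (rho2 tau V p1 p2 i1 i2).

Definition realizable (t : game_type) : Prop :=
  exists (m n : nat) (tau : vote m) (V : profile m n) (p1 p2 : 'I_n) (i1 i2 : vote m),
    is_2by2_GS_game tau V p1 p2 i1 i2 /\ game_type_of tau V p1 p2 i1 i2 = t.

From mathcomp Require Import all_boot fingroup perm.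
Set Implicit Arguments.
Unset Strict Implicit.
Unset Printing Implicit Defensive.

(* Under plurality, a GS-manipulation of voter p moves p's first place to the
   new winner x_p, which p did not rank first, and changes the sincere winner w.
   Let z be the winner when both players manipulate.  If z = x_2 then rho_1 = 0,
   and if z = x_1 then rho_2 = 0.  Otherwise z = w, because relative to the
   sincere profile the score of w can only grow and that of z only shrink.
   Moreover player 2 ranks x_1 first: otherwise his switch to x_2 <> w neither
   lowers x_1 nor raises w, and x_1 would still beat w.  Symmetrically player 1
   ranks x_2 first, so rho_1 = rho_2 = -.
   Types (ii)-(v) are witnessed by explicit profiles checked by computation:
   a plurality outcome depends on the ballots only through their top choices,
   so GS-manipulations are decided by trying every possible top. *)

Section Beats.
Variables (T : Type) (s pos : T -> nat).

Definition beats (a b : T) : bool :=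
  (s b < s a) || ((s b == s a) && (pos a < pos b)).

Lemma beats_asym a b : beats a b -> ~~ beats b a.
Proof.
rewrite /beats => /orP[lt_ba | /andP[/eqP-> lt_ab]].
  by rewrite negb_or ltnNge ltnW //= eq_sym ltn_eqF.
by rewrite ltnn eqxx /= -leqNgt ltnW.
Qed.

End Beats.

Lemma beats_mono (T : Type) (s s' pos : T -> nat) a b :
  beats s pos a b -> s a <= s' a -> s' b <= s b -> beats s' pos a b.
Proof.
rewrite /beats => /orP[lt_ba | /andP[/eqP eq_ba lt_ab]] le_a le_b.
  by rewrite (leq_ltn_trans le_b (leq_trans lt_ba le_a)).
rewrite -eq_ba leq_eqVlt in le_a.
case/orP: le_a => [/eqP <- | lt_a]; last by rewrite (leq_ltn_trans le_b lt_a).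
by rewrite ltn_neqAle le_b andbT; case: eqP => //= <-; rewrite eq_ba eqxx.
Qed.

Section PluralityBeats.
Variables (m n : nat) (tau : vote m) (X : profile m n).

Local Notation beatsX := (beats (score X) (fun c => tau c)).

Lemma plurality_beats d : d != plurality tau X -> beatsX (plurality tau X) d.
Proof.
rewrite /plurality; case: arg_maxnP => // c0 _ max_c0.
have c0_max : [forall d, score X d <= score X c0] by apply/forallP => e; apply: max_c0.
case: arg_minnP => [//| w /forallP w_max w_min neq_dw].
rewrite /beats ltn_neqAle w_max andbT; case: eqP => //= eq_dw.
have : tau w <= tau d by apply: w_min; apply/forallP => e; rewrite eq_dw.
by rewrite leq_eqVlt (inj_eq val_inj) (inj_eq perm_inj) eq_sym (negbTE neq_dw).
Qed.

Lemma plurality_eq w : (forall d, d != w -> beatsX w d) -> plurality tau X = w.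
Proof.
move=> w_beats; apply/eqP; apply: contraT => neq_pw.
have /negP[] := beats_asym (w_beats _ neq_pw).
by apply: plurality_beats; rewrite eq_sym.
Qed.

End PluralityBeats.

Definition top m (v : vote m) : 'I_m.+1 := (v^-1)%g ord0.

Lemma vote_eq0 m (v : vote m) c : (v c == ord0) = (top v == c).
Proof. by rewrite /top; apply/eqP/eqP => [<- | <-]; rewrite ?permK ?permKV. Qed.

Section Updates.
Variables (m n : nat) (X : profile m n).

Lemma score_upd_ge i v c : top (X i) != c -> score X c <= score (upd X i v) c.
Proof.
move=> neq_c; apply: subset_leq_card; apply/subsetP => j.
rewrite !inE ffunE !vote_eq0; case: (eqVneq j i) => // -> /eqP eq_c.
by rewrite eq_c eqxx in neq_c.
Qed.

Lemma score_upd_le i v c : top v != c -> score (upd X i v) c <= score X c.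
Proof.
move=> neq_c; apply: subset_leq_card; apply/subsetP => j.
by rewrite !inE ffunE !vote_eq0; case: (eqVneq j i) => // _; rewrite (negbTE neq_c).
Qed.

Lemma upd_id i : upd X i (X i) = X.
Proof. by apply/ffunP => j; rewrite ffunE; case: eqP => // ->. Qed.

Lemma updC i j v w : i != j -> upd (upd X i v) j w = upd (upd X j w) i v.
Proof.
move=> neq_ij; apply/ffunP => k; rewrite !ffunE.
by case: (eqVneq k j) => // ->; rewrite eq_sym (negbTE neq_ij).
Qed.

End Updates.

Lemma GS_manipulation_top m n (tau : vote m) (V : profile m n) p v :
  GS_manipulation tau V p v ->
  [/\ top (V p) != plurality tau V, top v = plurality tau (upd V p v)
    & plurality tau (upd V p v) != plurality tau V].
Proof.
case=> better _.
set w := plurality tau V in better *; set x := plurality tau (upd V p v) in better *.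
have neq_xw : x != w by apply: contraTneq better => ->; rewrite /prefers ltnn.
have top_w : top (V p) != w.
  by apply: contraTneq better => <-; rewrite /prefers /top permKV.
split => //; apply/eqP/contraT => top_x.
have neq_wx : w != x by rewrite eq_sym.
have /negP[] := beats_asym (plurality_beats neq_wx).
exact: beats_mono (plurality_beats neq_xw) (score_upd_ge v top_w) (score_upd_le V p top_x).
Qed.

Section TwoManipulators.
Variables (m n : nat) (tau : vote m) (V : profile m n) (p q : 'I_n) (i j : vote m).
Hypotheses (neq_pq : p != q)
  (manip_p : GS_manipulation tau V p i) (manip_q : GS_manipulation tau V q j).

Local Notation w := (plurality tau V).
Local Notation xp := (plurality tau (upd V p i)).
Local Notation xq := (plurality tau (upd V q j)).
Local Notation z := (plurality tau (upd (upd V p i) q j)).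

Let top_Vq : top (upd V p i q) = top (V q).
Proof. by rewrite ffunE eq_sym (negbTE neq_pq). Qed.

Lemma joint_plurality_sincere : z != xp -> z != xq -> z = w.
Proof.
move=> neq_zp neq_zq; apply/eqP/contraT => neq_zw.
have [top_p top_i _] := GS_manipulation_top manip_p.
have [top_q top_j _] := GS_manipulation_top manip_q.
have neq_wz : w != z by rewrite eq_sym.
have /negP[] := beats_asym (plurality_beats neq_wz).
apply: beats_mono (plurality_beats neq_zw) _ _.
  by apply: leq_trans (score_upd_ge i top_p) (score_upd_ge j _); rewrite top_Vq.
apply: leq_trans (score_upd_le _ q _) (score_upd_le V p _).
  by rewrite top_j eq_sym.
by rewrite top_i eq_sym.
Qed.

Lemma joint_plurality_top : z != xp -> z != xq -> top (V q) = xp.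
Proof.
move=> neq_zp neq_zq; apply/eqP/contraT => top_q.
have [_ _ neq_xw] := GS_manipulation_top manip_p.
have [_ top_j neq_xqw] := GS_manipulation_top manip_q.
have neq_wx : w != xp by rewrite eq_sym.
have neq_xz : xp != z by rewrite eq_sym.
have /negP[] := beats_asym (plurality_beats neq_xz).
rewrite joint_plurality_sincere //.
apply: beats_mono (plurality_beats neq_wx) _ _.
  by apply: score_upd_ge; rewrite top_Vq.
by apply: score_upd_le; rewrite top_j.
Qed.

End TwoManipulators.

Lemma cmp_top m (v : vote m) x : x != top v -> cmp v x (top v) = Minus.
Proof. by move=> neq_x; rewrite /cmp (negbTE neq_x) /prefers /top permKV ltn0. Qed.

Lemma GS_game_rho m n (tau : vote m) (V : profile m n) p1 p2 i1 i2 :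
  p1 != p2 -> GS_manipulation tau V p1 i1 -> GS_manipulation tau V p2 i2 ->
  [\/ rho1 tau V p1 p2 i1 i2 = Zero, rho2 tau V p1 p2 i1 i2 = Zero
    | rho1 tau V p1 p2 i1 i2 = Minus /\ rho2 tau V p1 p2 i1 i2 = Minus].
Proof.
move=> neq12 manip1 manip2; rewrite /rho1 /rho2 /W (upd_id V p1).
rewrite [upd (upd V p1 i1) p2 (V p2)]updC // (upd_id V p2).
set z := plurality tau (upd (upd V p1 i1) p2 i2).
have [-> | neq_z2] := eqVneq z (plurality tau (upd V p2 i2)).
  by rewrite /cmp eqxx; apply: Or31.
have [-> | neq_z1] := eqVneq z (plurality tau (upd V p1 i1)).
  by rewrite /cmp eqxx; apply: Or32.
apply: Or33.
have top2 := joint_plurality_top neq12 manip1 manip2 neq_z1 neq_z2.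
have neq21 : p2 != p1 by rewrite eq_sym.
have := joint_plurality_top neq21 manip2 manip1.
rewrite -(updC _ _ _ neq12) => /(_ neq_z2 neq_z1) top1.
by rewrite -top1 -top2 !cmp_top // ?top1 ?top2.
Qed.

Lemma GS_game_type m n (tau : vote m) (V : profile m n) p1 p2 i1 i2 :
  is_2by2_GS_game tau V p1 p2 i1 i2 ->
  game_type_of tau V p1 p2 i1 i2 <> T_i /\ game_type_of tau V p1 p2 i1 i2 <> T_vi.
Proof.
case=> /eqP neq12 _ manip1 manip2; rewrite /game_type_of.
by case: (GS_game_rho neq12 manip1 manip2) => [-> | -> | [-> ->]] //;
  [case: (rho2 tau V p1 p2 i1 i2) | case: (rho1 tau V p1 p2 i1 i2)].
Qed.

Lemma not_realizable_i_vi t : t = T_i \/ t = T_vi -> ~ realizable t.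
Proof.
move=> t_i_vi [m [n [tau [V [p1 [p2 [i1 [i2 [game type_t]]]]]]]]].
by have [] := GS_game_type game; case: t_i_vi => <-.
Qed.

(* A ranking lists the candidates from first to last place.  On a list that is
   not a ranking, [vote_of_ranking] returns the identity vote (a junk value). *)
Definition ranking m (r : seq nat) : bool := perm_eq r (iota 0 m.+1).

Definition prefers_ranking (r : seq nat) (a b : nat) : bool := index a r < index b r.

Lemma mem_ranking m r (c : 'I_m.+1) : ranking m r -> (c : nat) \in r.
Proof. by move/perm_mem->; rewrite mem_iota ltn_ord. Qed.

Lemma index_ranking m r (c : 'I_m.+1) : ranking m r -> index (c : nat) r < m.+1.
Proof.
move=> r_rk; have size_r : size r = m.+1 by rewrite (perm_size r_rk) size_iota.
by rewrite -[X in _ < X]size_r index_mem mem_ranking.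
Qed.

Section VoteOfRanking.
Variables (m : nat) (r : seq nat).

Definition rank_of (c : 'I_m.+1) : 'I_m.+1 :=
  if ranking m r then inord (index (c : nat) r) else c.

Lemma rank_of_inj : injective rank_of.
Proof.
move=> a b; rewrite /rank_of; case: ifP => // r_rk /(congr1 (@nat_of_ord _)).
rewrite !inordK ?index_ranking // => /(congr1 (nth 0 r)).
by rewrite !nth_index ?mem_ranking // => /val_inj.
Qed.

Definition vote_of_ranking : vote m := perm rank_of_inj.

Hypothesis r_ranking : ranking m r.

Lemma vote_of_rankingE c : vote_of_ranking c = index (c : nat) r :> nat.
Proof. by rewrite permE /rank_of r_ranking inordK ?index_ranking. Qed.

Lemma prefers_vote_of_ranking a b :
  prefers vote_of_ranking a b = prefers_ranking r a b.
Proof. by rewrite /prefers !vote_of_rankingE. Qed.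

Lemma top_vote_of_ranking : top vote_of_ranking = head 0 r :> nat.
Proof.
have /(congr1 (@nat_of_ord _)) := permKV vote_of_ranking ord0.
rewrite vote_of_rankingE /= => idx0.
by rewrite -nth0 -[X in nth _ _ X]idx0 nth_index ?mem_ranking.
Qed.

End VoteOfRanking.

Definition vote_with_top m (k : nat) : vote m := tperm ord0 (inord k).

Lemma top_vote_with_top m k : k < m.+1 -> top (vote_with_top m k) = k :> nat.
Proof. by move=> lt_k; rewrite /top tpermV tpermL inordK. Qed.

Section Tops.
Variables (m n : nat).

Definition tops (X : profile m n) : seq nat := [seq top (X i) : nat | i <- enum 'I_n].

Lemma size_tops X : size (tops X) = n.
Proof. by rewrite size_map size_enum_ord. Qed.

Lemma nth_tops X (i : 'I_n) : nth 0 (tops X) i = top (X i).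
Proof. by rewrite (nth_map i) ?nth_ord_enum ?size_enum_ord. Qed.

Lemma score_tops X c : score X c = count_mem (c : nat) (tops X).
Proof.
rewrite /score cardE /enum_mem size_filter /tops count_map enumT.
by apply: eq_count => i; apply: vote_eq0.
Qed.

Lemma tops_upd X i v : tops (upd X i v) = set_nth 0 (tops X) i (top v).
Proof.
apply: (@eq_from_nth _ 0) => [|k].
  by rewrite size_set_nth !size_tops; apply/esym/maxn_idPr.
rewrite size_tops => lt_kn; have [j ->] : exists j : 'I_n, k = j by exists (Ordinal lt_kn).
rewrite nth_set_nth /= (inj_eq (@ord_inj n)) !nth_tops ffunE.
by case: eqP.
Qed.

End Tops.

Definition beats_all_seq m (tr t : seq nat) (w : nat) : bool :=
  all (fun d => (d == w) || beats (fun c => count_mem c t) (fun c => index c tr) w d)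
    (iota 0 m.+1).

Definition plurality_seq m (tr t : seq nat) : nat :=
  head 0 [seq w <- iota 0 m.+1 | beats_all_seq m tr t w].

Lemma plurality_vote_of_ranking m n tr (X : profile m n) :
  ranking m tr -> plurality (vote_of_ranking m tr) X = plurality_seq m tr (tops X) :> nat.
Proof.
move=> tr_rk; set p := plurality _ X; set P := beats_all_seq m tr (tops X).
have beatsE (a b : 'I_m.+1) :
    beats (score X) (fun c => vote_of_ranking m tr c) a b
    = beats (fun c => count_mem c (tops X)) (fun c => index c tr) a b.
  by rewrite /beats !score_tops !vote_of_rankingE.
have P_p : P p.
  apply/allP => d; rewrite mem_iota => /= lt_d.
  case: (eqVneq d p) => //= neq_dp.
  have neq_d'p : Ordinal lt_d != p by [].
  by have := plurality_beats neq_d'p; rewrite beatsE.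
have P_uniq w : w < m.+1 -> P w -> w = p.
  move=> lt_w /allP P_w; suff -> : p = Ordinal lt_w by [].
  apply: plurality_eq => d neq_dw; rewrite beatsE.
  have d_iota : (d : nat) \in iota 0 m.+1 by rewrite mem_iota ltn_ord.
  have /orP[/eqP eq_dw | //] := P_w d d_iota.
  by case/eqP: neq_dw; apply: val_inj.
rewrite /plurality_seq -/P.
have : (p : nat) \in [seq w <- iota 0 m.+1 | P w] by rewrite mem_filter P_p mem_iota /=.
case E : [seq w <- _ | _] => [// | w s] _ /=.
have : w \in [seq w <- iota 0 m.+1 | P w] by rewrite E mem_head.
by rewrite mem_filter mem_iota => /andP[P_w /= lt_w]; rewrite (P_uniq w).
Qed.

Definition cmp_ranking (r : seq nat) (x y : nat) : sign :=
  if x == y then Zero else if prefers_ranking r x y then Plus else Minus.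

Section RankingProfile.
Variables (m n : nat) (tr : seq nat) (R : seq (seq nat)).

Definition profile_of_rankings : profile m n :=
  [ffun i : 'I_n => vote_of_ranking m (nth [::] R i)].

Local Notation t0 := [seq head 0 r | r <- R].

Definition deviation_winner (i k : nat) : nat :=
  plurality_seq m tr (set_nth 0 t0 i k).

(* A deviation of voter i is represented by its top candidate k. *)
Definition GS_top (i k : nat) : bool :=
  [&& k < m.+1,
      prefers_ranking (nth [::] R i) (deviation_winner i k) (plurality_seq m tr t0)
    & all (fun k' => (deviation_winner i k' == deviation_winner i k)
          || prefers_ranking (nth [::] R i) (deviation_winner i k) (deviation_winner i k'))
        (iota 0 m.+1)].

Definition joint_winner (p1 p2 k1 k2 : nat) : nat :=
  plurality_seq m tr (set_nth 0 (set_nth 0 t0 p1 k1) p2 k2).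

Definition ranking_game_type (p1 p2 k1 k2 : nat) : game_type :=
  let z := joint_winner p1 p2 k1 k2 in
  type_of (cmp_ranking (nth [::] R p1) z (joint_winner p1 p2 (nth 0 t0 p1) k2))
          (cmp_ranking (nth [::] R p2) z (joint_winner p1 p2 k1 (nth 0 t0 p2))).

Hypotheses (tr_ranking : ranking m tr) (R_ranking : all (ranking m) R) (size_R : size R = n).

Local Notation tau := (vote_of_ranking m tr).
Local Notation V := profile_of_rankings.

Lemma ranking_nth (i : 'I_n) : ranking m (nth [::] R i).
Proof. by apply: (allP R_ranking); rewrite mem_nth ?size_R. Qed.

Lemma tops_profile_of_rankings : tops V = t0.
Proof.
apply: (@eq_from_nth _ 0) => [|k]; first by rewrite size_tops size_map.
rewrite size_tops => lt_kn; have [j ->] : exists j : 'I_n, k = j by exists (Ordinal lt_kn).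
by rewrite nth_tops ffunE top_vote_of_ranking ?ranking_nth // (nth_map [::]) ?size_R.
Qed.

Lemma prefers_profile_of_rankings (i : 'I_n) a b :
  prefers (V i) a b = prefers_ranking (nth [::] R i) a b.
Proof. by rewrite ffunE prefers_vote_of_ranking ?ranking_nth. Qed.

Lemma cmp_profile_of_rankings (i : 'I_n) x y :
  cmp (V i) x y = cmp_ranking (nth [::] R i) x y.
Proof. by rewrite /cmp /cmp_ranking prefers_profile_of_rankings. Qed.

Lemma plurality_profile_of_rankings : plurality tau V = plurality_seq m tr t0 :> nat.
Proof. by rewrite plurality_vote_of_ranking // tops_profile_of_rankings. Qed.

Lemma plurality_upd_rankings (i : 'I_n) v :
  plurality tau (upd V i v) = deviation_winner i (top v) :> nat.
Proof. by rewrite plurality_vote_of_ranking // tops_upd tops_profile_of_rankings. Qed.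

Lemma plurality_upd2_rankings (p1 p2 : 'I_n) v1 v2 :
  plurality tau (upd (upd V p1 v1) p2 v2) = joint_winner p1 p2 (top v1) (top v2) :> nat.
Proof. by rewrite plurality_vote_of_ranking // !tops_upd tops_profile_of_rankings. Qed.

Lemma GS_manipulation_rankingP (i : 'I_n) v :
  GS_manipulation tau V i v <-> GS_top i (top v).
Proof.
rewrite /GS_manipulation /GS_top ltn_ord prefers_profile_of_rankings.
rewrite plurality_upd_rankings plurality_profile_of_rankings andTb.
split=> [[-> best] | /andP[-> /allP best]].
  apply/allP => k; rewrite mem_iota => /= lt_k.
  have [/(congr1 (@nat_of_ord _)) | ] := best (vote_with_top m k).
    by rewrite !plurality_upd_rankings top_vote_with_top // => ->; rewrite eqxx.
  rewrite prefers_profile_of_rankings !plurality_upd_rankings top_vote_with_top //.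
  by move=> ->; rewrite orbT.
split=> // v'.
have top_iota : (top v' : nat) \in iota 0 m.+1 by rewrite mem_iota ltn_ord.
have /orP[/eqP eq_v' | ] := best _ top_iota.
  by left; apply: ord_inj; rewrite !plurality_upd_rankings.
by right; rewrite prefers_profile_of_rankings !plurality_upd_rankings.
Qed.

Lemma GS_manipulator_rankingP (i : 'I_n) :
  GS_manipulator tau V i <-> has (GS_top i) (iota 0 m.+1).
Proof.
split=> [[v /GS_manipulation_rankingP GS_v] | /hasP[k _ GS_k]].
  by apply/hasP; exists (top v : nat); rewrite ?mem_iota ?ltn_ord.
have /andP[lt_k _] := GS_k.
by exists (vote_with_top m k); apply/GS_manipulation_rankingP; rewrite top_vote_with_top.
Qed.

Lemma game_type_of_rankings (p1 p2 : 'I_n) k1 k2 : k1 < m.+1 -> k2 < m.+1 ->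
  game_type_of tau V p1 p2 (vote_with_top m k1) (vote_with_top m k2)
  = ranking_game_type p1 p2 k1 k2.
Proof.
move=> lt_k1 lt_k2; rewrite /game_type_of /rho1 /rho2 /W.
have nth_t0 (i : 'I_n) : nth 0 t0 i = top (V i) by rewrite -tops_profile_of_rankings nth_tops.
rewrite !cmp_profile_of_rankings !plurality_upd2_rankings !top_vote_with_top //.
by rewrite /ranking_game_type !nth_t0.
Qed.

Lemma realizable_rankings (p1 p2 : 'I_n) k1 k2 t :
  [seq i <- iota 0 n | has (GS_top i) (iota 0 m.+1)] = [:: p1 : nat; p2 : nat] ->
  GS_top p1 k1 -> GS_top p2 k2 -> ranking_game_type p1 p2 k1 k2 = t -> realizable t.
Proof.
move=> manipulators GS_k1 GS_k2 <-.
have /andP[lt_k1 _] := GS_k1; have /andP[lt_k2 _] := GS_k2.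
exists m, n, tau, V, p1, p2, (vote_with_top m k1), (vote_with_top m k2).
split; last exact: game_type_of_rankings.
split.
- have := filter_uniq (fun i => has (GS_top i) (iota 0 m.+1)) (iota_uniq 0 n).
  by rewrite manipulators /= inE andbT => neq12 eq12; rewrite eq12 eqxx in neq12.
- move=> i; apply: (iff_trans (GS_manipulator_rankingP i)).
  have := mem_filter (fun i => has (GS_top i) (iota 0 m.+1)) i (iota 0 n).
  rewrite manipulators mem_iota leq0n add0n ltn_ord !andbT !inE => <-.
  by split=> [/orP[] /eqP/ord_inj-> | [] ->]; rewrite ?eqxx ?orbT; auto.
- by apply/GS_manipulation_rankingP; rewrite top_vote_with_top.
- by apply/GS_manipulation_rankingP; rewrite top_vote_with_top.
Qed.

End RankingProfile.

(* Arguments: m (there are m + 1 candidates), the number of voters, the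
   tie-breaking ranking, the sincere rankings, the two players, and the top
   candidates of their manipulations. *)
Lemma realizable_ii : realizable T_ii.
Proof.
by apply: (@realizable_rankings 2 4 [:: 1; 2; 0]
  [:: [:: 0; 1; 2]; [:: 0; 1; 2]; [:: 1; 2; 0]; [:: 2; 1; 0]] _ _ _
  (@Ordinal 4 2 isT) (@Ordinal 4 3 isT) 2 1); vm_compute.
Qed.

Lemma realizable_iii : realizable T_iii.
Proof.
by apply: (@realizable_rankings 2 5 [:: 1; 0; 2]
  [:: [:: 0; 1; 2]; [:: 0; 1; 2]; [:: 1; 0; 2]; [:: 2; 1; 0]; [:: 2; 1; 0]] _ _ _
  (@Ordinal 5 3 isT) (@Ordinal 5 4 isT) 1 1); vm_compute.
Qed.

Lemma realizable_iv : realizable T_iv.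
Proof.
by apply: (@realizable_rankings 3 6 [:: 1; 2; 0; 3]
  [:: [:: 0; 1; 2; 3]; [:: 0; 1; 2; 3]; [:: 1; 0; 2; 3]; [:: 2; 0; 1; 3];
      [:: 3; 1; 2; 0]; [:: 3; 2; 1; 0]] _ _ _
  (@Ordinal 6 4 isT) (@Ordinal 6 5 isT) 1 2); vm_compute.
Qed.

Lemma realizable_v : realizable T_v.
Proof.
by apply: (@realizable_rankings 3 5 [:: 1; 2; 0; 3]
  [:: [:: 0; 1; 2; 3]; [:: 0; 1; 2; 3]; [:: 3; 1; 2; 0]; [:: 1; 2; 0; 3];
      [:: 2; 0; 1; 3]] _ _ _
  (@Ordinal 5 2 isT) (@Ordinal 5 3 isT) 1 2); vm_compute.
Qed.

Theorem mainTheorem5 :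
  (realizable T_ii /\ realizable T_iii /\ realizable T_iv /\ realizable T_v) /\
  (~ realizable T_i /\ ~ realizable T_vi).
Proof.
split; first by split; last split; last split;
  [exact: realizable_ii | exact: realizable_iii | exact: realizable_iv | exact: realizable_v].
by split; apply: not_realizable_i_vi; [left | right].
Qed.
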